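(* Let $q$ be even and $n\ge1$. If $W$ is an $n$-dimensional Wild subspace over $\mathrm{GF}(q)$, then $\{f(1): f\in W\}=\mathrm{GF}(q^n)$.
   Context: Let $q$ be even. An o-permutation over $\mathrm{GF}(q^n)$ is a function $f:\mathrm{GF}(q^n)\to\mathrm{GF}(q^n)$ with $f(0)=0$ such that, for every $s\in\mathrm{GF}(q^n)$, the map $x\mapsto (f(x+s)+f(s))/x$ is a permutation of $\mathrm{GF}(q^n)\setminus\{0\}$. Let $\mathfrak F$ be the $\mathrm{GF}(q)$-vector space of all functions $f:\mathrm{GF}(q^n)\to\mathrm{GF}(q^n)$ with $f(0)=0$. An $n$-dimensional Wild subspace over $\mathrm{GF}(q)$ is an $n$-dimensional $\mathrm{GF}(q)$-subspace $W$ of $\mathfrak F$ every nonzero element of which is an o-permutation over $\mathrm{GF}(q^n)$. *)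

From HB Require Import structures.
From mathcomp Require Import all_boot all_order all_algebra all_field.
Set Implicit Arguments. Unset Strict Implicit. Unset Printing Implicit Defensive.
Import GRing.Theory.
Local Open Scope ring_scope.

(* GF(q) is a finite field F (q = #|F|) and GF(q^n) is a field extension L of F
   of dimension n = \dim {:L}.  We use the alias [finvect_type L] to equip L with
   its (finite) finType structure, so that functions L -> L form the
   F-vector space {ffun finvect_type L -> finvect_type L}. *)
Notation fL L := (finvect_type L).

Definition o_permutation (K : fieldType) (f : K -> K) : Prop :=
  f 0 = 0 /\
  forall s : K,
    let g := fun x => (f (x + s) + f s) / x in
    [/\ (forall x, x != 0 -> g x != 0),
        (forall x y, x != 0 -> y != 0 -> g x = g y -> x = y) &
        (forall y, y != 0 -> exists2 x, x != 0 & g x = y)].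

Definition wild_subspace (F : finFieldType) (L : fieldExtType F) (n : nat)
    (W : {vspace {ffun fL L -> fL L}}) : Prop :=
  [/\ \dim W = n,
      (forall f, f \in W -> f 0 = 0) &
      (forall f, f \in W -> f != 0 -> o_permutation (fun x : fL L => f x))].

(* Evaluation at 1 is an F-linear map from W to GF(q^n).  Taking s = 0 in the
   definition of an o-permutation shows that a nonzero o-permutation has no
   nonzero root, so evaluation at 1 is injective on W; since dim W = n = dim
   GF(q^n), it is onto. *)

From HB Require Import structures.
From mathcomp Require Import all_boot all_order all_algebra all_field.
Set Implicit Arguments. Unset Strict Implicit. Unset Printing Implicit Defensive.
Import GRing.Theory.
Local Open Scope ring_scope.

Section FfunEval.
Variables (R : pzRingType) (aT : finType) (V : lmodType R) (a : aT).

Definition ffun_eval (f : {ffun aT -> V}) : V := f a.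

Lemma ffun_eval_is_linear : linear ffun_eval.
Proof. by move=> k f g; rewrite /ffun_eval !ffunE. Qed.

HB.instance Definition _ :=
  GRing.isLinear.Build R {ffun aT -> V} V _ ffun_eval ffun_eval_is_linear.

End FfunEval.

Lemma limg_fullv_dim (K : fieldType) (U V : vectType K) (h : 'Hom(U, V))
    (W : {vspace U}) :
  (W :&: lker h = 0)%VS -> \dim W = \dim {:V} -> (h @: W)%VS = fullv.
Proof.
move=> ker0 dimW; apply/eqP.
by rewrite eqEdim subvf /= limg_dim_eq // dimW.
Qed.

Lemma o_permutation_neq0 (K : fieldType) (f : K -> K) x :
  o_permutation f -> x != 0 -> f x != 0.
Proof.
move=> [f0 perm] nz_x; have [nz_g _ _] := perm 0.
by have := nz_g x nz_x; rewrite addr0 f0 addr0 mulf_eq0 negb_or => /andP[].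
Qed.

Lemma wild_subspace_eval1_ker (F : finFieldType) (L : fieldExtType F) n
    (W : {vspace {ffun fL L -> fL L}}) :
  wild_subspace n W -> (W :&: lker (linfun (ffun_eval (1%R : fL L))) = 0)%VS.
Proof.
move=> [_ _ Wo]; apply/eqP; rewrite -subv0; apply/subvP => f.
rewrite memv_cap memv_ker memv0 lfunE /= /ffun_eval => /andP[fW f1_0].
apply: contraLR f1_0 => nz_f.
exact: o_permutation_neq0 (Wo f fW nz_f) (oner_neq0 _).
Qed.

Theorem corollary1 (F : finFieldType) (L : fieldExtType F) (n : nat)
    (W : {vspace {ffun fL L -> fL L}}) :
  ~~ odd #|F| ->
  \dim {:L} = n -> (1 <= n)%N ->
  wild_subspace n W ->
  forall y : fL L, exists2 f, f \in W & f 1 = y.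
Proof.
move=> _ dimL _ wildW y.
have [dimW _ _] := wildW.
have onto : (linfun (ffun_eval (1%R : fL L)) @: W)%VS = fullv.
  apply: limg_fullv_dim; first exact: wild_subspace_eval1_ker wildW.
  by rewrite dimW dimvf -dimL dimvf.
have /memv_imgP[f fW ->] : y \in (linfun (ffun_eval (1%R : fL L)) @: W)%VS.
  by rewrite onto memvf.
by exists f; rewrite // lfunE.
Qed.
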